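(* Let $A(z)=\sum_{n\ge0}\Big(\sum_{P}\operatorname{amp}(P)\Big)z^n$, where the inner sum runs over all Motzkin paths $P$ of length $n$. Then $$A(z)=-(1+v+v^2)(1-v^{-2})\sum_{h\ge1}\frac{v^{h}}{1-v^{h}}-\frac{(1+2v)(1+v+v^2)}{v}.$$
   Context: A Motzkin path of length $n$ is a sequence of $n$ steps, each an up-step $(1,1)$, a down-step $(1,-1)$ or a horizontal step $(1,0)$, starting at $(0,0)$, ending at $(n,0)$, and never going below the $x$-axis. Its height $h$ is the maximal $y$-coordinate reached. A horizontal step on level $j$ is a horizontal step from $(x,j)$ to $(x+1,j)$. The amplitude $\operatorname{amp}(P)$ of a Motzkin path $P$ of height $h$ is $2h+1$ if $P$ has a horizontal step on level $h$, and $2h$ otherwise. Here $v=v(z)=\frac{1-z-\sqrt{1-2z-3z^2}}{2z}$ is the formal power series with $v(0)=0$ satisfying $z=\frac{v}{1+v+v^2}$. *)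

From HB Require Import structures.
From mathcomp Require Import all_boot all_order all_algebra.
From mathcomp Require Import all_classical all_reals all_analysis.
Set Implicit Arguments. Unset Strict Implicit. Unset Printing Implicit Defensive.
Import Order.TTheory GRing.Theory Num.Theory.
Import numFieldNormedType.Exports.

Inductive step := Up | Down | Flat.

Fixpoint words (n : nat) : seq (seq step) :=
  if n is n'.+1 then [seq s :: w | s <- [:: Up; Down; Flat], w <- words n']
  else [:: [::]].

(* Level after a step taken from level y (only used when it stays >= 0). *)
Definition next (y : nat) (s : step) : nat :=
  match s with Up => y.+1 | Down => y.-1 | Flat => y end.

Fixpoint motzkin_from (y : nat) (p : seq step) : bool :=
  match p with
  | [::] => y == 0
  | s :: p' => (if s is Down then 0 < y else true) && motzkin_from (next y s) p'
  end.

Definition is_motzkin (p : seq step) : bool := motzkin_from 0 p.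

Fixpoint maxh (y : nat) (p : seq step) : nat :=
  match p with
  | [::] => y
  | s :: p' => maxn y (maxh (next y s) p')
  end.

Definition height (p : seq step) : nat := maxh 0 p.

Fixpoint has_flat_at (j y : nat) (p : seq step) : bool :=
  match p with
  | [::] => false
  | s :: p' => (if s is Flat then y == j else false) || has_flat_at j (next y s) p'
  end.

Definition amp (p : seq step) : nat :=
  if has_flat_at (height p) 0 p then (height p).*2.+1 else (height p).*2.

Definition coefA (n : nat) : nat :=
  \sum_(p <- words n | is_motzkin p) amp p.

Local Open Scope ring_scope.

Definition vfun (R : realType) (z : R) : R :=
  (1 - z - Num.sqrt (1 - 2 * z - 3 * z ^+ 2)) / (2 * z).

(* h-th term (h >= 1, shifted index h = k+1) of sum_{h>=1} v^h/(1-v^h). *)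
Definition lterm (R : realType) (v : R) (k : nat) : R :=
  v ^+ k.+1 / (1 - v ^+ k.+1).

Definition rhsA (R : realType) (v : R) : R :=
  - (1 + v + v ^+ 2) * (1 - v ^- 2) * limn (series (lterm v))
  - (1 + 2 * v) * (1 + v + v ^+ 2) / v.

(* A path has amplitude at most [k] exactly when it stays at levels [y] with
   [2y <= k] and has flat steps only at levels with [2y + 1 <= k].  Writing
   [amp p = #{k | k < amp p}] gives [A_n = \sum_k (M_n - M_n^(k))], where [M_n^(k)]
   counts the Motzkin paths confined to that strip.  After the substitution
   [z = v / (1 + v + v^2)] the transfer equations of the strip are solved by
   [F_k(y) = (1 + v + v^2) (v^y - v^(k+1-y)) / (1 - v^(k+3))], hence
   [M(z) - F_k(0) = (1 + v + v^2) (1 - v^2) v^-2 * v^(k+3) / (1 - v^(k+3))], and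
   summing over [k] gives the Lambert series.  For [0 < z < 1/6] the truncated
   transfer sums converge to [F_k] geometrically and uniformly in [k], which
   justifies exchanging the two summations. *)

From Pilot Require Import Defs.
From HB Require Import structures.
From mathcomp Require Import all_boot all_order all_algebra.
From mathcomp Require Import all_classical all_reals all_analysis.
From mathcomp Require Import zify ring lra.
Import Order.TTheory GRing.Theory Num.Theory.
Import numFieldNormedType.Exports.
Set Implicit Arguments. Unset Strict Implicit. Unset Printing Implicit Defensive.

Definition step_code (s : step) : nat :=
  match s with Up => 0 | Down => 1 | Flat => 2 end.
Definition step_decode (n : nat) : step :=
  match n with 0 => Up | 1 => Down | _ => Flat end.
Lemma step_codeK : cancel step_code step_decode. Proof. by case. Qed.
HB.instance Definition _ := Equality.copy step (can_type step_codeK).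

Lemma size_words_mem n w : w \in words n -> size w = n.
Proof.
elim: n w => [|n IH] w /=; first by rewrite inE => /eqP ->.
by rewrite !mem_cat in_nil orbF => /or3P [] /mapP [w' /IH <- ->].
Qed.

Lemma count_wordsS n (P : pred (seq step)) : count P (words n.+1) =
  count (fun w => P (Up :: w)) (words n) + count (fun w => P (Down :: w)) (words n)
  + count (fun w => P (Flat :: w)) (words n).
Proof. by rewrite /= !count_cat !count_map /= addn0 addnA. Qed.

Lemma has_flat_at_le_maxh j y p : has_flat_at j y p -> j <= maxh y p.
Proof.
elim: p y => [|s p IH] y //= /orP [|/IH jle]; last by rewrite leq_max jle orbT.
by case: s => //= /eqP ->; rewrite leq_maxl.
Qed.

Lemma maxh_le y p : maxh y p <= y + size p.
Proof.
elim: p y => [|s p IH] y /=; first by rewrite addn0.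
by rewrite geq_max leq_addr /=; apply: (leq_trans (IH _)); case: s => /=; lia.
Qed.

Lemma amp_le_size p : amp p <= (size p).*2.+1.
Proof. by rewrite /amp /height; have := maxh_le 0 p; case: has_flat_at; lia. Qed.

Fixpoint in_strip (k y : nat) (p : seq step) : bool :=
  match p with
  | [::] => y == 0
  | s :: p' =>
    [&& y.*2 <= k,
        match s with Up => true | Down => 0 < y | Flat => y.*2.+1 <= k end
      & in_strip k (Defs.next y s) p']
  end.

Lemma in_stripE k y p : in_strip k y p =
  [&& motzkin_from y p, maxh y p <= k./2 & odd k || ~~ has_flat_at k./2 y p].
Proof.
elim: p y => [|s p IH] y /=; first by case: y => [|y]; rewrite ?orbT; lia.
rewrite IH geq_max (_ : (y.*2 <= k) = (y <= k./2)); last by lia.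
case: s => /=.
- by case: (y <= _); case: motzkin_from.
- by case: (y <= _); case: (0 < y); case: motzkin_from.
rewrite (_ : (y.*2.+1 <= k) = (y <= k./2) && (odd k || (y != k./2))); last by lia.
by case: (y <= _); case: (odd k); case: (y == _); case: motzkin_from;
  case: (maxh _ _ <= _); case: has_flat_at.
Qed.

Lemma in_strip_amp k p : in_strip k 0 p = is_motzkin p && (amp p <= k).
Proof.
rewrite in_stripE /is_motzkin /amp /height; case: motzkin_from => //=.
set h := maxh 0 p.
have hf_le := @has_flat_at_le_maxh k./2 0 p; rewrite -/h in hf_le.
case: (eqVneq k./2 h) => [<-|neq_h].
  by case: has_flat_at; rewrite ?orbT ?orbF; lia.
by case: (boolP (has_flat_at k./2 0 p)) => [/hf_le|_]; case: has_flat_at;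
  rewrite ?orbT ?orbF; lia.
Qed.

Definition strip_count (k n y : nat) : nat := count (in_strip k y) (words n).
Definition motzkin_count (n : nat) : nat := count is_motzkin (words n).

Lemma strip_count0 k y : strip_count k 0 y = (y == 0).
Proof. by rewrite /strip_count /= addn0. Qed.

Lemma count_andl T (b : bool) (P : pred T) s :
  count (fun x => b && P x) s = if b then count P s else 0.
Proof. by case: b => //; elim: s. Qed.

Lemma strip_countS k n y : strip_count k n.+1 y =
  if y.*2 <= k then
    strip_count k n y.+1 + (if 0 < y then strip_count k n y.-1 else 0)
    + (if y.*2.+1 <= k then strip_count k n y else 0)
  else 0.
Proof.
rewrite /strip_count count_wordsS /= !count_andl.
by case: (y.*2 <= k); case: (0 < y); case: (y.*2.+1 <= k).
Qed.

Lemma strip_count_motzkin k n : n.*2.+1 <= k -> strip_count k n 0 = motzkin_count n.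
Proof.
move=> lt_nk; apply: eq_in_count => p /size_words_mem size_p.
by rewrite /= in_strip_amp (leq_trans (amp_le_size p)) ?andbT // size_p.
Qed.

Lemma strip_count_le_motzkin k n : strip_count k n 0 <= motzkin_count n.
Proof. by apply: sub_count => p; rewrite /= in_strip_amp => /andP []. Qed.

Lemma count_andC T (a b : pred T) s :
  count (fun x => a x && b x) s + count (fun x => a x && ~~ b x) s = count a s.
Proof. by elim: s => //= x s <-; case: (a x); case: (b x) => /=; lia. Qed.

Lemma count_motzkin_amp_gt k n :
  count (fun p => is_motzkin p && (k < amp p)) (words n) =
  motzkin_count n - strip_count k n 0.
Proof.
rewrite /motzkin_count -(count_andC is_motzkin (fun p => amp p <= k)).
rewrite -(eq_count (in_strip_amp k)) /strip_count.
by under [count (fun p => _ && (k < _)) _]eq_count do rewrite ltnNge; rewrite addKn.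
Qed.

Lemma sum_ord_ltn K a : \sum_(k < K) (k < a) = minn a K.
Proof. by elim: K => [|K IH]; rewrite ?big_ord0 ?big_ord_recr /= ?IH; lia. Qed.

Lemma coefA_strip n K : n.*2.+1 <= K ->
  coefA n = \sum_(k < K) (motzkin_count n - strip_count k n 0).
Proof.
move=> lt_nK; rewrite /coefA big_seq_cond.
under eq_bigr => p /andP [/size_words_mem size_p _].
  rewrite -(minn_idPl (leq_trans (amp_le_size p) _ : amp p <= K)) ?size_p //.
  rewrite -sum_ord_ltn.
  over.
rewrite -big_seq_cond exchange_big /=; apply: eq_bigr => k _.
by rewrite -count_motzkin_amp_gt -sum1_count big_mkcondr.
Qed.

Local Open Scope ring_scope.

Section PartialSums.
Variables (R : comPzRingType) (z : R).

Definition strip_partial (k N y : nat) : R :=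
  \sum_(n < N) (strip_count k n y)%:R * z ^+ n.

Lemma strip_partial_out k N y : ~~ (y.*2 <= k)%N -> strip_partial k N y = 0.
Proof.
move=> y_out; rewrite /strip_partial big1 // => -[[|n] _] _ /=.
  by rewrite strip_count0 (_ : (y == 0%N) = false) ?mul0r //; lia.
by rewrite strip_countS (negbTE y_out) mul0r.
Qed.

Lemma strip_partialS k N y : (y.*2 <= k)%N ->
  strip_partial k N.+1 y = (y == 0%N)%:R + z * (strip_partial k N y.+1
    + (if (0 < y)%N then strip_partial k N y.-1 else 0)
    + (if (y.*2.+1 <= k)%N then strip_partial k N y else 0)).
Proof.
move=> y_in; rewrite /strip_partial big_ord_recl /= strip_count0 expr0 mulr1.
congr (_ + _); under eq_bigr do rewrite strip_countS y_in exprS mulrCA.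
rewrite -big_distrr; congr (z * _).
by case: (0 < y)%N; case: (y.*2 < k)%N; rewrite ?addr0 -?big_split;
  apply: eq_bigr => i _; rewrite ?addn0 ?natrD ?mulrDl.
Qed.

Lemma motzkin_partial N :
  \sum_(n < N) (motzkin_count n)%:R * z ^+ n = strip_partial N.*2 N 0.
Proof.
apply: eq_bigr => n _; rewrite strip_count_motzkin //.
by have := ltn_ord n; lia.
Qed.

Lemma coefA_partial N :
  \sum_(n < N) (coefA n)%:R * z ^+ n =
  \sum_(k < N.*2) (strip_partial N.*2 N 0 - strip_partial k N 0).
Proof.
rewrite -motzkin_partial /strip_partial.
have coefA_term (n : 'I_N) : (coefA n)%:R * z ^+ n =
    \sum_(k < N.*2) ((motzkin_count n)%:R * z ^+ n - (strip_count k n 0)%:R * z ^+ n).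
  rewrite (@coefA_strip n N.*2); last by have := ltn_ord n; lia.
  rewrite natr_sum mulr_suml; apply: eq_bigr => k _.
  by rewrite natrB ?mulrBl ?strip_count_le_motzkin.
rewrite (eq_bigr _ (fun n _ => coefA_term n)) exchange_big /=.
by apply: eq_bigr => k _; rewrite sumrB.
Qed.

End PartialSums.

(* The Motzkin generating function [(1 - z - sqrt(1 - 2z - 3z^2)) / (2z^2)]
   equals [v / z = 1 + v + v^2]. *)
Definition motzkin_gf (R : pzRingType) (v : R) : R := 1 + v + v ^+ 2.

(* [y_j = z (y_(j-1) + y_j + y_(j+1))] has characteristic roots [v] and [1/v];
   the antisymmetry about level [(k+1)/2] encodes the upper wall of the strip. *)
Definition strip_sol (R : fieldType) (v : R) (k y : nat) : R :=
  motzkin_gf v * (v ^+ y - v ^+ (k.+1 - y)) / (1 - v ^+ k.+3).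

Definition strip_gf (R : fieldType) (v : R) (k y : nat) : R :=
  if (y.*2 <= k)%N then strip_sol v k y else 0.

Lemma motzkin_gf_gt0 (R : realFieldType) (v : R) : 0 < motzkin_gf v.
Proof. by rewrite /motzkin_gf; nra. Qed.

Section StripSolution.
Variables (R : realFieldType) (v z : R).
Hypotheses (v_gt0 : 0 < v) (v_lt1 : v < 1) (zE : z * motzkin_gf v = v).

Lemma motzkin_gf_div_ge0 : 0 <= motzkin_gf v / (1 - v).
Proof. by rewrite divr_ge0 ?subr_ge0 ?(ltW v_lt1) ?(ltW (motzkin_gf_gt0 v)). Qed.

Lemma z_def : z = v / motzkin_gf v.
Proof. by rewrite -{1}zE mulfK // gt_eqF // motzkin_gf_gt0. Qed.

Lemma z_gt0 : 0 < z.
Proof. by rewrite z_def divr_gt0 // motzkin_gf_gt0. Qed.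

Lemma v_le3z : v <= 3 * z.
Proof.
have M_le3 : motzkin_gf v <= 3.
  by rewrite /motzkin_gf expr2; have := v_gt0; have := v_lt1; nra.
by rewrite -{1}zE mulrC ler_wpM2r // ltW // z_gt0.
Qed.

Lemma subr_exprS_gt0 n : 0 < 1 - v ^+ n.+1.
Proof. by rewrite subr_gt0 exprn_ilt1 // ltW. Qed.

Lemma subr_ler_exprS n : 1 - v <= 1 - v ^+ n.+1.
Proof. by rewrite lerB // ler_iXnr // ltW. Qed.

Lemma strip_sol_rec k y : (0 < y <= k)%N ->
  z * (strip_sol v k y.-1 + strip_sol v k y + strip_sol v k y.+1) = strip_sol v k y.
Proof.
case: y => // y /andP [_ le_yk] /=; rewrite /strip_sol.
have -> : (k.+1 - y = (k - y.+1).+2)%N by lia.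
have -> : (k.+1 - y.+1 = (k - y.+1).+1)%N by lia.
have -> : (k.+1 - y.+2 = k - y.+1)%N by lia.
have D_gt0 := subr_exprS_gt0 k.+2; have M_gt0 := motzkin_gf_gt0 v.
rewrite z_def !exprS /motzkin_gf; field.
by rewrite -!exprS (gt_eqF D_gt0) (gt_eqF M_gt0).
Qed.

Lemma strip_sol_bottom k : 1 + z * (strip_sol v k 0 + strip_sol v k 1) = strip_sol v k 0.
Proof.
rewrite /strip_sol subn0 subSS subn0.
have D_gt0 := subr_exprS_gt0 k.+2; have M_gt0 := motzkin_gf_gt0 v.
rewrite z_def !exprS expr0 /motzkin_gf; field.
by rewrite -!exprS (gt_eqF D_gt0) (gt_eqF M_gt0).
Qed.

Lemma strip_sol_odd y : strip_sol v y.*2.+1 y.+1 = 0.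
Proof. by rewrite /strip_sol (_ : (y.*2.+2 - y.+1 = y.+1)%N) ?subrr ?mulr0 ?mul0r //; lia. Qed.

Lemma strip_sol_even y : strip_sol v y.*2 y.+1 = - strip_sol v y.*2 y.
Proof.
rewrite /strip_sol (_ : (y.*2.+1 - y.+1 = y)%N); last by lia.
by rewrite (_ : (y.*2.+1 - y = y.+1)%N); [ring | lia].
Qed.

Lemma strip_gf_neighbours k y : (y.*2 <= k)%N ->
  strip_gf v k y.+1 + (if (0 < y)%N then strip_gf v k y.-1 else 0)
    + (if (y.*2.+1 <= k)%N then strip_gf v k y else 0) =
  (if (0 < y)%N then strip_sol v k y.-1 else 0) + strip_sol v k y + strip_sol v k y.+1.
Proof.
move=> y_in; rewrite /strip_gf y_in (_ : (y.-1.*2 <= k)%N); last by lia.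
have [k_gt|k_le] := ltnP y.*2.+1 k; first by rewrite (ltnW k_gt); ring.
have [->|->] : k = y.*2 \/ k = y.*2.+1 by lia.
- by rewrite ltnn strip_sol_even; ring.
- by rewrite leqnn strip_sol_odd; ring.
Qed.

Lemma strip_gf_rec k y : (y.*2 <= k)%N ->
  strip_gf v k y = (y == 0%N)%:R + z * (strip_gf v k y.+1
    + (if (0 < y)%N then strip_gf v k y.-1 else 0)
    + (if (y.*2.+1 <= k)%N then strip_gf v k y else 0)).
Proof.
move=> y_in; rewrite strip_gf_neighbours // /strip_gf y_in.
case: y y_in => [|y] y_in /=; first by rewrite -{1}strip_sol_bottom; ring.
by rewrite -{1}(@strip_sol_rec k y.+1) /=; [ring | lia].
Qed.

Lemma strip_sol_bound k y : `|strip_sol v k y| <= motzkin_gf v / (1 - v).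
Proof.
have pow01 n : 0 <= v ^+ n <= 1 by rewrite exprn_ge0 ?exprn_ile1 // ltW.
have diff_le1 : `|v ^+ y - v ^+ (k.+1 - y)| <= 1.
  move: (pow01 y) (pow01 (k.+1 - y)%N) => /andP [? ?] /andP [? ?].
  by rewrite ler_norml; apply/andP; split; lra.
have M_gt0 := motzkin_gf_gt0 v; have D_gt0 := subr_exprS_gt0 k.+2.
rewrite /strip_sol normrM normfV normrM (gtr0_norm M_gt0) (gtr0_norm D_gt0).
apply: ler_pM.
- by rewrite mulr_ge0 // ltW.
- by rewrite invr_ge0 ltW.
- by rewrite ler_piMr // ltW.
- by rewrite lef_pV2 ?subr_ler_exprS // posrE subr_gt0.
Qed.

Lemma strip_partial_err k N y :
  `|strip_gf v k y - strip_partial z k N y| <= motzkin_gf v / (1 - v) * (3 * z) ^+ N.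
Proof.
have z_ge0 := ltW z_gt0.
have B_ge0 := motzkin_gf_div_ge0.
have err_ge0 n : 0 <= motzkin_gf v / (1 - v) * (3 * z) ^+ n.
  by rewrite mulr_ge0 // exprn_ge0 // mulr_ge0.
elim: N y => [|N IH] y.
  rewrite /strip_partial big_ord0 subr0 expr0 mulr1 /strip_gf.
  by case: ifP; rewrite ?normr0 ?strip_sol_bound.
have [y_in|y_out] := boolP (y.*2 <= k)%N; last first.
  by rewrite strip_partial_out // /strip_gf (negbTE y_out) subrr normr0.
set e := motzkin_gf v / (1 - v) * (3 * z) ^+ N.
have err_if (b : bool) y' : `|(if b then strip_gf v k y' else 0)
    - (if b then strip_partial z k N y' else 0)| <= e.
  by case: b; rewrite ?subrr ?normr0 ?IH ?err_ge0.
rewrite strip_gf_rec // strip_partialS //.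
have -> : forall a b c a' b' c' (d : R), d + z * (a + b + c) - (d + z * (a' + b' + c'))
    = z * ((a - a') + (b - b') + (c - c')) by move=> *; ring.
rewrite normrM (ger0_norm z_ge0) exprS.
rewrite (_ : _ * (3 * z * _) = z * (3 * e)); last by rewrite /e; ring.
apply: ler_wpM2l => //; apply: le_trans (ler_normD _ _) _.
apply: le_trans (lerD (ler_normD _ _) (lexx _)) _.
have := IH y.+1; have := err_if (0 < y)%N y.-1; have := err_if (y.*2 < k)%N y.
rewrite -/e; lra.
Qed.
End StripSolution.

Definition lambert_coef (R : fieldType) (v : R) : R :=
  motzkin_gf v * (1 - v ^+ 2) / v ^+ 2.

Local Open Scope classical_set_scope.

Lemma cvgr0_geometric_le (R : realType) (u : R ^nat) (C r : R) :
  `|r| < 1 -> (forall n, `|u n| <= C * r ^+ n) -> u @ \oo --> 0.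
Proof.
move=> r_lt1 u_le; apply/cvgr0Pnorm_le => e e_gt0.
apply: filterS (@cvgr0_norm_le _ _ _ _ _ _ (cvg_geometric C r_lt1) _ e_gt0) => n geo_n.
exact: le_trans (u_le n) (le_trans (ler_norm _) geo_n).
Qed.

Section Lambert.
Variables (R : realType) (v z : R).
Hypotheses (v_gt0 : 0 < v) (v_lt1 : v < 1) (zE : z * motzkin_gf v = v).

Lemma lterm_ge0 k : 0 <= lterm v k.
Proof. by rewrite divr_ge0 ?exprn_ge0 ?ltW ?(subr_exprS_gt0 v_gt0 v_lt1). Qed.

Lemma lterm_le_geometric k : lterm v k <= geometric (1 - v)^-1 v k.
Proof.
rewrite /lterm /geometric /= [X in _ <= X]mulrC; apply: ler_pM.
- by rewrite exprn_ge0 // ltW.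
- by rewrite invr_ge0 ltW ?(subr_exprS_gt0 v_gt0 v_lt1).
- by rewrite exprS ler_piMl ?exprn_ge0 // ltW.
- by rewrite lef_pV2 ?(subr_ler_exprS v_gt0 v_lt1) // posrE subr_gt0 // exprn_ilt1 ?ltW.
Qed.

Lemma series_lterm_cvg : cvg (series (lterm v) @ \oo).
Proof.
apply: (series_le_cvg lterm_ge0 _ lterm_le_geometric).
  by move=> k; rewrite /geometric /= mulr_ge0 ?exprn_ge0 ?invr_ge0 ?subr_ge0 ?ltW.
by apply: is_cvg_geometric_series; rewrite gtr0_norm.
Qed.

Lemma strip_gf0 k : strip_gf v k 0 = motzkin_gf v - lambert_coef v * lterm v k.+2.
Proof.
have D_gt0 := subr_exprS_gt0 v_gt0 v_lt1 k.+2.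
rewrite /strip_gf /strip_sol /lambert_coef /lterm subn0 !exprS expr0 mulr1 /=.
by field; rewrite -!exprS (gt_eqF D_gt0) (gt_eqF v_gt0).
Qed.

Lemma lambert_coef_ge0 : 0 <= lambert_coef v.
Proof.
have sq_lt1 : v ^+ 2 < 1 by rewrite exprn_ilt1 // ltW.
have M_gt0 := motzkin_gf_gt0 v.
by rewrite divr_ge0 ?exprn_ge0 ?mulr_ge0 ?subr_ge0 ?ltW.
Qed.

Lemma lambert_term_ge0 k : 0 <= lambert_coef v * lterm v k.
Proof. by rewrite mulr_ge0 ?lambert_coef_ge0 ?lterm_ge0. Qed.

Lemma lambert_term_le k :
  lambert_coef v * lterm v k.+2 <= motzkin_gf v / (1 - v) * v ^+ k.
Proof.
have B_ge0 := motzkin_gf_div_ge0 v_lt1.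
apply: le_trans (ler_wpM2l lambert_coef_ge0 (lterm_le_geometric k.+2)) _.
rewrite /geometric /= (_ : _ * (_ * _) = (1 - v ^+ 2) * (motzkin_gf v / (1 - v) * v ^+ k)).
  apply: ler_piMl; first by rewrite mulr_ge0 // exprn_ge0 // ltW.
  by rewrite gerBl exprn_ge0 // ltW.
rewrite /lambert_coef !exprS expr0; field.
by rewrite subr_eq0 eq_sym (lt_eqF v_lt1) (gt_eqF v_gt0).
Qed.

Lemma coefA_partial_err N :
  `|\sum_(n < N) (coefA n)%:R * z ^+ n - \sum_(k < N.*2) lambert_coef v * lterm v k.+2|
    <= 6 * (motzkin_gf v / (1 - v)) * (6 * z) ^+ N.
Proof.
have B_ge0 := motzkin_gf_div_ge0 v_lt1.
have z3_ge0 : 0 <= 3 * z by rewrite mulr_ge0 // ltW // (z_gt0 v_gt0 zE).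
set e := motzkin_gf v / (1 - v) * (3 * z) ^+ N.
have e_ge0 : 0 <= e by rewrite mulr_ge0 // exprn_ge0.
have tail_le : lambert_coef v * lterm v N.*2.+2 <= e.
  apply: le_trans (lambert_term_le _) _; apply: ler_wpM2l => //.
  rewrite -mul2n exprM lerXn2r ?nnegrE ?exprn_ge0 ?(ltW v_gt0) //.
  apply: le_trans (v_le3z v_gt0 v_lt1 zE); rewrite expr2 ler_piMl ?ltW //.
have term_le (k : 'I_N.*2) : `|strip_partial z N.*2 N 0 - strip_partial z k N 0
    - lambert_coef v * lterm v k.+2| <= 3 * e.
  have := strip_partial_err v_gt0 v_lt1 zE N.*2 N 0.
  have := strip_partial_err v_gt0 v_lt1 zE k N 0.
  have := lambert_term_ge0 N.*2.+2.
  rewrite !strip_gf0 !ler_norml -/e => ? /andP [? ?] /andP [? ?].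
  by apply/andP; split; lra.
rewrite coefA_partial -sumrB; apply: le_trans (ler_norm_sum _ _ _) _.
apply: le_trans (ler_sum _ (fun k _ => term_le k)) _.
have N_le : (N%:R : R) <= 2 ^+ N by rewrite -natrX ler_nat ltnW // ltn_expl.
rewrite sumr_const card_ord (_ : (3 * e) *+ N.*2 = 6 * (N%:R * e)); last first.
  by rewrite -mulr_natl -mul2n natrM; ring.
rewrite (_ : 6 * _ * _ = 6 * (2 ^+ N * e)); last first.
  by rewrite /e (_ : 6 * z = 2 * (3 * z)) ?exprMn; ring.
by rewrite ler_wpM2l // ler_wpM2r.
Qed.

Lemma lambert_sum_rhsA :
  lambert_coef v * (limn (series (lterm v)) - lterm v 0 - lterm v 1) = rhsA v.
Proof.
have v1_neq0 : 1 - v != 0 by rewrite subr_eq0 eq_sym lt_eqF.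
have v2_neq0 : 1 - v ^+ 2 != 0 by rewrite subr_eq0 eq_sym lt_eqF // exprn_ilt1 // ltW.
rewrite /rhsA /lambert_coef /lterm /motzkin_gf expr1.
by field; rewrite v1_neq0 v2_neq0 gt_eqF.
Qed.

Lemma lambert_partial_cvg :
  (fun K => \sum_(k < K) lambert_coef v * lterm v k.+2) @ \oo --> rhsA v.
Proof.
have shifted : [sequence series (lterm v) (K + 2)%N]_K @ \oo --> limn (series (lterm v)).
  by rewrite cvg_shiftn; exact: series_lterm_cvg.
rewrite -lambert_sum_rhsA (_ : (fun K => _) = fun K =>
    lambert_coef v * (series (lterm v) (K + 2)%N - lterm v 0 - lterm v 1)).
  by apply: cvgMl_tmp; apply: cvgB; [apply: cvgB | ]; [exact: shifted | exact: cvg_cst | exact: cvg_cst].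
apply/funext => K; rewrite addn2 seriesEord /= !big_ord_recl /= -mulr_sumr.
by congr (_ * _); ring.
Qed.

Lemma coefA_series_cvg : z < 1 / 6 ->
  series (fun n => (coefA n)%:R * z ^+ n) @ \oo --> rhsA v.
Proof.
move=> z_lt; set L := fun K => \sum_(k < K) lambert_coef v * lterm v k.+2.
have L_even : (fun N => L N.*2) @ \oo --> rhsA v.
  rewrite (_ : (fun N => _) = L \o muln 2); last by apply/funext => N; rewrite /= mul2n.
  exact: cvg_comp _ _ (cvg_mulnl 2 isT) lambert_partial_cvg.
have err : (fun N => series (fun n => (coefA n)%:R * z ^+ n) N - L N.*2) @ \oo --> 0.
  apply: (@cvgr0_geometric_le _ _ (6 * (motzkin_gf v / (1 - v))) (6 * z)).
    by rewrite gtr0_norm ?mulr_gt0 ?(z_gt0 v_gt0 zE) //; lra.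
  by move=> N; rewrite seriesEord; exact: coefA_partial_err.
rewrite -[rhsA v]add0r (_ : series _ = fun N => (series (fun n => (coefA n)%:R * z ^+ n) N - L N.*2) + L N.*2).
  exact: cvgD.
by apply/funext => N; rewrite subrK.
Qed.

End Lambert.

Lemma vfun_spec (R : realType) (z : R) : 0 < z -> z < 1 / 3 ->
  [/\ 0 < vfun z, vfun z < 1 & z * motzkin_gf (vfun z) = vfun z].
Proof.
move=> z_gt0 z_lt.
have disc_ge0 : 0 <= 1 - 2 * z - 3 * z ^+ 2 by rewrite expr2; nra.
have s_ge0 := sqrtr_ge0 (1 - 2 * z - 3 * z ^+ 2).
have s2 := sqr_sqrtr disc_ge0.
set s := Num.sqrt _ in s_ge0 s2 *.
have s_lt : s < 1 - z.
  by rewrite -(@ltr_pXn2r _ 2) ?nnegrE ?s2 //; [rewrite !expr2; nra | lra].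
have s_gt : 1 - 3 * z < s.
  by rewrite -(@ltr_pXn2r _ 2) ?nnegrE ?s2 //; [rewrite !expr2; nra | lra].
have z_neq0 : z != 0 by rewrite gt_eqF.
rewrite /vfun -/s; split.
- by rewrite divr_gt0 ?mulr_gt0 // subr_gt0.
- by rewrite ltr_pdivrMr ?mulr_gt0 // mul1r; lra.
apply/eqP; rewrite -subr_eq0.
have -> : z * motzkin_gf ((1 - z - s) / (2 * z)) - (1 - z - s) / (2 * z) =
    (s ^+ 2 - (1 - 2 * z - 3 * z ^+ 2)) / (4 * z).
  by rewrite /motzkin_gf; field.
by rewrite s2 subrr mul0r.
Qed.

Theorem mainTheorem3 (R : realType) :
  exists eps : R, 0 < eps /\
    forall z : R, 0 < z < eps ->
      cvg (series (lterm (vfun z)) @ \oo) /\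
      series (fun n => (coefA n)%:R * z ^+ n) @ \oo --> rhsA (vfun z).
Proof.
exists (1 / 6); split => [|z /andP [z_gt0 z_lt]]; first by rewrite divr_gt0.
have z_lt3 : z < 1 / 3 by lra.
have [v_gt0 v_lt1 zE] := vfun_spec z_gt0 z_lt3.
split; first exact: series_lterm_cvg.
exact: coefA_series_cvg.
Qed.
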